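(* Let $n$ be a positive integer. Then $\mathsf{D}_{\mathrm{cc}}^\rightarrow(\mathsf{OMB}_n \circ \mathsf{AND}) = \lceil\log(n + 1)\rceil$.
   Context: $\mathsf{OMB}_n:\{0,1\}^n\to\{0,1\}$ is defined by $\mathsf{OMB}_n(x)=1$ if $\max\{i\in[n]:x_i=0\}$ is odd and $0$ otherwise, with $\mathsf{OMB}_n(1^n)=0$. $f\circ\mathsf{AND}$ is the two-party function $(x,y)\mapsto f(x_1\wedge y_1,\dots,x_n\wedge y_n)$ (Alice holds $x$, Bob $y$), and $\mathsf{D}_{\mathrm{cc}}^\rightarrow$ is deterministic one-way communication complexity. Logarithms are base 2. *)

From mathcomp Require Import all_boot.
Set Implicit Arguments. Unset Strict Implicit. Unset Printing Implicit Defensive.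

(* n-bit strings; bit i (0-based) of x is x i, it corresponds to coordinate x_(i+1) *)
Notation bits n := {ffun 'I_n -> bool}.

Definition OMB (n : nat) (x : bits n) : bool :=
  [exists i : 'I_n,
     [&& x i == false, [forall j : 'I_n, (i < j) ==> x j] & odd i.+1]].

Definition AND_comp (n : nat) (f : bits n -> bool) (x y : bits n) : bool :=
  f [ffun i => x i && y i].

(* A deterministic one-way protocol of cost c for F : Alice (holding x) sends a
   c-bit message a(x), Bob (holding y) outputs b(a(x), y), which must equal F x y. *)
Definition oneway_protocol (n : nat) (F : bits n -> bits n -> bool) (c : nat) : bool :=
  [exists a : {ffun bits n -> bits c},
    exists b : {ffun (bits c * bits n)%type -> bool},
      [forall x : bits n, forall y : bits n, b (a x, y) == F x y]].

Lemma oneway_protocol_exists (n : nat) (F : bits n -> bits n -> bool) :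
  exists c, oneway_protocol F c.
Proof.
exists n; apply/existsP; exists [ffun x => x].
apply/existsP; exists [ffun p => F p.1 p.2].
by apply/forallP => x; apply/forallP => y; rewrite !ffunE.
Qed.

Definition Dcc_oneway (n : nat) (F : bits n -> bits n -> bool) : nat :=
  ex_minn (oneway_protocol_exists F).

From mathcomp Require Import all_boot.

(* Writing [last_zero x] for the 1-based position of the last zero of [x]
   (0 if there is none), OMB is the parity of [last_zero], and the last zero
   of [x && y] sits at [maxn (last_zero x) (last_zero y)].  So Bob only needs
   [last_zero x], one of n + 1 values, which Alice sends in
   ceil(log (n + 1)) bits.  Conversely, the n + 1 strings [0^k 1^(n-k)] have
   pairwise distinct rows: for k < l, Bob's input [0^(l-1) 1^(n-l+1)] yields
   the parities of l - 1 and l.  A one-way protocol must send distinct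
   messages on inputs with distinct rows, hence needs n + 1 messages. *)

Lemma card_bits c : #|{: bits c}| = 2 ^ c.
Proof. by rewrite card_ffun card_bool card_ord. Qed.

Section OnewayProtocol.

Variables (n : nat) (F : bits n -> bits n -> bool).

Lemma oneway_protocolP c :
  oneway_protocol F c <->
  exists a : bits n -> bits c, forall x x', a x = a x' -> F x =1 F x'.
Proof.
split.
  case/existsP=> a /existsP[b /forallP bP]; exists a => x x' eq_a y.
  by rewrite -(eqP (forallP (bP x) y)) -(eqP (forallP (bP x') y)) eq_a.
case=> a aP; apply/existsP; exists [ffun x => a x]; apply/existsP.
exists [ffun p => if [pick x | a x == p.1] is Some x then F x p.2 else false].
apply/forallP=> x; apply/forallP=> y; rewrite !ffunE /=.
by case: pickP => [x' /eqP /aP -> // | /(_ x)]; rewrite eqxx.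
Qed.

Lemma oneway_protocol_up_log m (h : bits n -> 'I_m) :
  (forall x x', h x = h x' -> F x =1 F x') -> oneway_protocol F (up_log 2 m).
Proof.
move=> hP; have m_le : m <= #|{: bits (up_log 2 m)}| by rewrite card_bits up_logP.
apply/oneway_protocolP; exists (fun x => enum_val (widen_ord m_le (h x))).
by move=> x x' /enum_val_inj /(congr1 val) /(@ord_inj m); exact: hP.
Qed.

Lemma up_log_le_oneway m (u : 'I_m -> bits n) c :
  (forall k l, F (u k) =1 F (u l) -> k = l) ->
  oneway_protocol F c -> up_log 2 m <= c.
Proof.
move=> uP /oneway_protocolP[a aP]; apply: up_log_min => //.
rewrite -card_bits -[m]card_ord; apply: (@leq_card _ _ (a \o u)).
by move=> k l /aP /uP.
Qed.

Lemma Dcc_oneway_eq d :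
  oneway_protocol F d -> (forall c, oneway_protocol F c -> d <= c) ->
  Dcc_oneway F = d.
Proof.
move=> Fd d_min; rewrite /Dcc_oneway; case: ex_minnP => c Fc c_min.
by apply/eqP; rewrite eqn_leq c_min ?d_min.
Qed.

End OnewayProtocol.

Section LastZero.

Context {n : nat}.

Definition last_zero (x : bits n) : nat := \max_(i | ~~ x i) i.+1.

Definition zero_prefix (k : nat) : bits n := [ffun i : 'I_n => k <= i].

Lemma last_zero_le (x : bits n) : last_zero x <= n.
Proof. by apply/bigmax_leqP => i _; exact: ltn_ord. Qed.

Lemma last_zero_ge (x : bits n) (j : 'I_n) : last_zero x <= j -> x j.
Proof.
by rewrite leqNgt; apply: contraNT => xj; exact: (bigmax_sup j).
Qed.

Lemma last_zero_at (x : bits n) (j : 'I_n) : j.+1 = last_zero x -> ~~ x j.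
Proof.
rewrite /last_zero; case: (pickP (fun i : 'I_n => ~~ x i)) => [i0 xi0 | no0].
  by rewrite (bigmax_eq_arg i0) //; case: arg_maxnP => // k xk _ [/val_inj ->].
by rewrite big_pred0.
Qed.

Lemma last_zero_eq m (x : bits n) :
  m <= n -> (forall j : 'I_n, m <= j -> x j) ->
  (forall j : 'I_n, j.+1 = m -> ~~ x j) -> last_zero x = m.
Proof.
move=> le_m_n ones zero_m; apply/eqP; rewrite eqn_leq; apply/andP; split.
  by apply/bigmax_leqP => i; apply: contraR; rewrite -leqNgt; exact: ones.
case: m le_m_n zero_m {ones} => // m lt_m_n zero_m.
exact: (bigmax_sup (Ordinal lt_m_n)) (zero_m _ _) _.
Qed.

Lemma OMB_last_zero (x : bits n) : OMB x = odd (last_zero x).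
Proof.
apply/existsP/idP => [[i /and3P[/eqP xi0 /forallP ones odd_i]] | odd_last].
  suff -> : last_zero x = i.+1 by [].
  apply: last_zero_eq => [|j le_ij|j /succn_inj /val_inj ->]; last by rewrite xi0.
  - exact: ltn_ord.
  - exact: implyP (ones j) le_ij.
have [i last_i] : exists i : 'I_n, i.+1 = last_zero x.
  have lt_last : (last_zero x).-1 < n.
    by rewrite prednK ?last_zero_le ?odd_gt0.
  by exists (Ordinal lt_last); rewrite /= prednK ?odd_gt0.
exists i; rewrite (negbTE (last_zero_at _ _ last_i)) last_i odd_last andbT.
by apply/forallP => j; apply/implyP; exact: last_zero_ge.
Qed.

Lemma last_zero_and (x y : bits n) :
  last_zero [ffun i => x i && y i] = maxn (last_zero x) (last_zero y).
Proof.
apply: last_zero_eq => [|j|j].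
- by rewrite geq_max !last_zero_le.
- by rewrite geq_max ffunE => /andP[/last_zero_ge -> /last_zero_ge ->].
- rewrite ffunE negb_and /maxn.
  by case: ifP => _ /last_zero_at /negbTE ->; rewrite ?orbT.
Qed.

Lemma last_zero_zero_prefix k : k <= n -> last_zero (zero_prefix k) = k.
Proof.
move=> le_k_n; apply: last_zero_eq => // j; rewrite ffunE //.
by move<-; rewrite ltnn.
Qed.

End LastZero.

Lemma AND_OMBE n (x y : bits n) :
  AND_comp (@OMB n) x y = odd (maxn (last_zero x) (last_zero y)).
Proof. by rewrite /AND_comp OMB_last_zero last_zero_and. Qed.

Lemma AND_OMB_zero_prefix_separate n k l : k < l <= n ->
  AND_comp (@OMB n) (zero_prefix k) (zero_prefix l.-1)
  != AND_comp (@OMB n) (zero_prefix l) (zero_prefix l.-1).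
Proof.
case: l => // l /andP[le_k_l lt_l_n]; rewrite ltnS in le_k_l.
have le_l_n := ltnW lt_l_n.
rewrite !AND_OMBE !last_zero_zero_prefix ?(leq_trans le_k_l) //=.
by rewrite (maxn_idPr le_k_l) (maxn_idPl (leqnSn l)) /=; case: (odd l).
Qed.

Lemma AND_OMB_zero_prefix_inj n (k l : 'I_n.+1) :
  AND_comp (@OMB n) (zero_prefix k) =1 AND_comp (@OMB n) (zero_prefix l) ->
  k = l.
Proof.
wlog lt_kl : k l / k < l => [sym same_rows | same_rows].
  case: (ltngtP k l) => [lt_kl | lt_lk | /val_inj //]; first exact: sym.
  by apply/esym/sym => // y; rewrite same_rows.
have := @AND_OMB_zero_prefix_separate n k l; rewrite lt_kl -ltnS ltn_ord.
by rewrite same_rows eqxx => /(_ isT).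
Qed.

Theorem claim4p7 (n : nat) (hn : 0 < n) :
  Dcc_oneway (AND_comp (@OMB n)) = up_log 2 n.+1.
Proof.
apply: Dcc_oneway_eq.
  pose last_zero_ord (x : bits n) := @Ordinal n.+1 _ (last_zero_le x).
  apply: (@oneway_protocol_up_log _ _ _ last_zero_ord).
  by move=> x x' [same] y; rewrite !AND_OMBE same.
by move=> c; apply: up_log_le_oneway; exact: AND_OMB_zero_prefix_inj.
Qed.
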